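(* Fix $\beta\ne0$. For any episode $k\in[K]$, with $\pi^k$ the policy used in episode $k$ and $\mathcal{F}_k$ the history before episode $k$, $$\frac1\beta\big[e^{\beta V_1^*(s_1)}-e^{\beta V_1^{\pi^k}(s_1)}\big]=\mathbb{E}\Big[\sum_{h=1}^H\overline{\Delta}_h\big(s_h,\pi^k_h(s_h);\tau^{\pi^k}_{h-1}\big)\,\Big|\,\mathcal{F}_k\Big],$$ where $\tau^{\pi^k}=((s_h,\pi_h^k(s_h)))_{h\in[H]}$ is the random trajectory generated from $s_1$ by following $\pi^k$ under the transitions $\mathcal{P}$.
   Context: Episodic finite-horizon tabular MDP with finite states $\mathcal{S}$, finite actions $\mathcal{A}$, horizon $H$, $K$ episodes, transitions $\mathcal{P}_h(\cdot\mid s,a)$, deterministic rewards $r_h:\mathcal{S}\times\mathcal{A}\to[0,1]$, fixed initial state $s_1$. A policy is $\pi=(\pi_h:\mathcal{S}\to\mathcal{A})_{h\in[H]}$; the learner's policy $\pi^k$ in episode $k$ is determined by $\mathcal{F}_k$. For $\beta\ne0$: $V_h^\pi(s)=\frac1\beta\log\mathbb{E}[e^{\beta\sum_{i=h}^H r_i(s_i,\pi_i(s_i))}\mid s_h=s]$, $Q_h^\pi(s,a)$ likewise with $a_h=a$ and $\pi$ thereafter; $V^*_h=\sup_\pi V^\pi_h$ attained by an optimal $\pi^*$, $Q^*_h=Q^{\pi^*}_h$. For a trajectory prefix $\tau_{h-1}=((s_j,a_j))_{j<h}$, $R(\tau_{h-1})=\sum_{j<h}r_j(s_j,a_j)$ (zero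 for $h=1$), and the semi-normalized gap is $\overline{\Delta}_h(s,a;\tau_{h-1})=\frac1\beta e^{\beta R(\tau_{h-1})}[e^{\beta V^*_h(s)}-e^{\beta Q^*_h(s,a)}]$. *)

From HB Require Import structures.
From mathcomp Require Import all_boot all_order all_algebra.
From mathcomp Require Import all_classical all_reals all_analysis.
Set Implicit Arguments. Unset Strict Implicit. Unset Printing Implicit Defensive.
Import Order.TTheory GRing.Theory Num.Theory.
Local Open Scope ring_scope.

Section MDP.
Variables (R : realType) (S A : finType).
(* Steps are indexed by nat; step h ranges over 1..H. *)
(* P h s a s' = P_h(s' | s, a);  r h s a = r_h(s, a). *)
Variables (P : nat -> S -> A -> S -> R) (r : nat -> S -> A -> R).

Definition policy := nat -> S -> A.

(* Expectation of F over the random trajectory ((s_h,a_h),...,(s_{h+n-1},a_{h+n-1}))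
   started at state s at step h, taking action a at step h and following pi
   afterwards.  The next state after the last pair is drawn and discarded. *)
Fixpoint texp_from (pi : policy) (n h : nat) (s : S) (a : A)
    (F : seq (S * A) -> R) : R :=
  match n with
  | 0 => F [::]
  | n'.+1 => \sum_(s' : S) P h s a s' *
      (match n' with
       | 0 => F [:: (s, a)]
       | _ => texp_from pi n' h.+1 s' (pi h.+1 s') (fun t => F ((s, a) :: t))
       end)
  end.

Definition texp (pi : policy) (n h : nat) (s : S) (F : seq (S * A) -> R) : R :=
  texp_from pi n h s (pi h s) F.

Fixpoint retsum (h : nat) (t : seq (S * A)) : R :=
  match t with
  | [::] => 0
  | (s, a) :: t' => r h s a + retsum h.+1 t'
  end.

Variables (beta : R) (H : nat).

Definition Vpi (pi : policy) (h : nat) (s : S) : R :=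
  beta^-1 * ln (texp pi (H.+1 - h) h s (fun t => expR (beta * retsum h t))).

Definition Qpi (pi : policy) (h : nat) (s : S) (a : A) : R :=
  beta^-1 * ln (texp_from pi (H.+1 - h) h s a (fun t => expR (beta * retsum h t))).

Definition gapbar (pistar : policy) (h : nat) (s : S) (a : A)
    (tau : seq (S * A)) : R :=
  beta^-1 * expR (beta * retsum 1 tau) *
  (expR (beta * Vpi pistar h s) - expR (beta * Qpi pistar h s a)).

(* sum_{h=1}^H gapbar_h(s_h, a_h; tau_{h-1}) for a full trajectory t of length H,
   whose i-th entry (0-based) is (s_{i+1}, a_{i+1}) *)
Definition sum_gaps (pistar : policy) (d : S * A) (t : seq (S * A)) : R :=
  \sum_(i < H) gapbar pistar i.+1 (nth d t i).1 (nth d t i).2 (take i t).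

End MDP.

From HB Require Import structures.
From mathcomp Require Import all_boot all_order all_algebra.
From mathcomp Require Import all_classical all_reals all_analysis.
From mathcomp Require Import ring.
Set Implicit Arguments. Unset Strict Implicit. Unset Printing Implicit Defensive.
Import Order.TTheory GRing.Theory Num.Theory.
Local Open Scope ring_scope.

(* Passing from V and Q to the exponential values e^{beta V} and e^{beta Q}
   makes the risk-sensitive Bellman equation linear:
   e^{beta Q_h(s,a)} = e^{beta r_h(s,a)} E_{s' ~ P_h(.|s,a)} e^{beta V_{h+1}(s')}.
   Peeling off the first step of a trajectory of pi, the gap at step h plus
   e^{beta r_h} times the gaps that follow has expectation
   beta^-1 (e^{beta V*_h(s)} - e^{beta Q^pi_h(s,a)}), by induction on the
   remaining horizon: the expected sum of gaps telescopes. *)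

Section TrajectoryExpectation.
Variables (R : realType) (S A : finType) (P : nat -> S -> A -> S -> R).
Hypothesis P_ge0 : forall h s a s', 0 <= P h s a s'.
Hypothesis P_sum1 : forall h s a, \sum_(s' : S) P h s a s' = 1.
Variable pi : policy S A.

Lemma texp_fromS n h s a F :
  texp_from P pi n.+1 h s a F =
  \sum_(s' : S) P h s a s' *
    texp_from P pi n h.+1 s' (pi h.+1 s') (fun t => F ((s, a) :: t)).
Proof. by case: n. Qed.

Lemma sum_P_affine h s a c d (f : S -> R) :
  \sum_(s' : S) P h s a s' * (c + d * f s') = c + d * \sum_(s' : S) P h s a s' * f s'.
Proof.
rewrite mulr_sumr -[c in RHS]mulr1 -(P_sum1 h s a) mulr_sumr -big_split /=.
by apply: eq_bigr => s' _; ring.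
Qed.

Lemma texp_from_affine n h s a c d G :
  texp_from P pi n h s a (fun t => c + d * G t) = c + d * texp_from P pi n h s a G.
Proof.
elim: n h s a G => [//|n IH] h s a G.
by rewrite !texp_fromS; under eq_bigr do rewrite IH; rewrite sum_P_affine.
Qed.

Lemma texp_from_gt0 n h s a (F : seq (S * A) -> R) :
  (forall t, 0 < F t) -> 0 < texp_from P pi n h s a F.
Proof.
elim: n h s a F => [|n IH] h s a F F_gt0; first exact: F_gt0.
have /hasP[s0 _ P_s0_gt0] :
    has (fun s' => true && (0 < P h s a s')) (index_enum S).
  by rewrite -psumr_neq0 // P_sum1 oner_eq0.
have term_gt0 s' :
    0 < texp_from P pi n h.+1 s' (pi h.+1 s') (fun t => F ((s, a) :: t)).
  exact: IH.
have term_ge0 s' : 0 <= P h s a s' *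
    texp_from P pi n h.+1 s' (pi h.+1 s') (fun t => F ((s, a) :: t)).
  by rewrite mulr_ge0 // ltW.
rewrite texp_fromS lt0r psumr_neq0 // sumr_ge0 // andbT.
by apply/hasP; exists s0; rewrite ?mem_index_enum ?mulr_gt0.
Qed.

End TrajectoryExpectation.

Section ExponentialValues.
Variables (R : realType) (S A : finType).
Variables (P : nat -> S -> A -> S -> R) (r : nat -> S -> A -> R).
Variables (beta : R) (H : nat).
Hypothesis P_ge0 : forall h s a s', 0 <= P h s a s'.
Hypothesis P_sum1 : forall h s a, \sum_(s' : S) P h s a s' = 1.

Definition expQ (pi : policy S A) h s a :=
  texp_from P pi (H.+1 - h) h s a (fun t => expR (beta * retsum r h t)).

Definition expV (pi : policy S A) h s := expQ pi h s (pi h s).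

Lemma expR_Qpi (pi : policy S A) h s a : beta != 0 ->
  expR (beta * Qpi P r beta H pi h s a) = expQ pi h s a.
Proof.
move=> beta_neq0; rewrite /Qpi mulrA mulfV // mul1r lnK // posrE.
by apply: texp_from_gt0 => // t; exact: expR_gt0.
Qed.

Lemma expR_Vpi (pi : policy S A) h s : beta != 0 ->
  expR (beta * Vpi P r beta H pi h s) = expV pi h s.
Proof. exact: expR_Qpi. Qed.

Lemma expQ_bellman (pi : policy S A) h s a : (h <= H)%N ->
  expQ pi h s a =
  expR (beta * r h s a) * \sum_(s' : S) P h s a s' * expV pi h.+1 s'.
Proof.
move=> le_hH; rewrite /expV /expQ subSS (subSn le_hH) texp_fromS mulr_sumr.
apply: eq_bigr => s' _; rewrite mulrCA; congr (_ * _).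
have -> : (fun t => expR (beta * retsum r h ((s, a) :: t))) =
    (fun t => 0 + expR (beta * r h s a) * expR (beta * retsum r h.+1 t)).
  by apply/funext => t /=; rewrite add0r mulrDr expRD.
by rewrite texp_from_affine // add0r.
Qed.

Definition gap_sum (pistar : policy S A) n h (d : S * A) (t : seq (S * A)) :=
  \sum_(j < n) beta^-1 * expR (beta * retsum r h (take j t)) *
    (expV pistar (h + j) (nth d t j).1 -
     expQ pistar (h + j) (nth d t j).1 (nth d t j).2).

Lemma gap_sum_cons pistar n h d s a t :
  gap_sum pistar n.+1 h d ((s, a) :: t) =
  beta^-1 * (expV pistar h s - expQ pistar h s a) +
  expR (beta * r h s a) * gap_sum pistar n h.+1 d t.
Proof.
rewrite /gap_sum big_ord_recl /= addn0 mulr0 expR0 mulr1; congr (_ + _).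
rewrite mulr_sumr; apply: eq_bigr => j _ /=.
rewrite /bump leq0n add1n !add0n -addSnnS (mulrDr beta) expRD; ring.
Qed.

Lemma texp_from_gap_sum pistar pi n h s a d : (h + n = H.+1)%N ->
  texp_from P pi n h s a (gap_sum pistar n h d) =
  beta^-1 * (expV pistar h s - expQ pi h s a).
Proof.
elim: n h s a => [|n IH] h s a; rewrite ?addn0 => def_h.
  by rewrite /gap_sum /expV /expQ def_h subnn /= big_ord0 subrr mulr0.
have le_hH : (h <= H)%N by rewrite -ltnS -def_h addnS ltnS leq_addr.
have def_h1 : (h.+1 + n = H.+1)%N by rewrite addSnnS.
rewrite texp_fromS.
have -> : (fun t => gap_sum pistar n.+1 h d ((s, a) :: t)) =
    (fun t => beta^-1 * (expV pistar h s - expQ pistar h s a) +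
              expR (beta * r h s a) * gap_sum pistar n h.+1 d t).
  by apply/funext => t; rewrite gap_sum_cons.
under eq_bigr => s' _ do rewrite texp_from_affine // IH // -/(expV pi h.+1 s').
rewrite sum_P_affine // (expQ_bellman pistar) // (expQ_bellman pi) //.
have -> : \sum_(s' : S) P h s a s' *
      (beta^-1 * (expV pistar h.+1 s' - expV pi h.+1 s')) =
    beta^-1 * (\sum_(s' : S) P h s a s' * expV pistar h.+1 s' -
               \sum_(s' : S) P h s a s' * expV pi h.+1 s').
  by rewrite -sumrB mulr_sumr; apply: eq_bigr => s' _; ring.
ring.
Qed.

End ExponentialValues.

Theorem lemma4 (R : realType) (S A : finType)
  (P : nat -> S -> A -> S -> R) (r : nat -> S -> A -> R)
  (beta : R) (H K : nat) (s1 : S)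
  (HP0 : forall h s a s', 0 <= P h s a s')
  (HP1 : forall h s a, \sum_(s' : S) P h s a s' = 1)
  (Hr : forall h s a, 0 <= r h s a <= 1)
  (Hbeta : beta != 0)
  (pistar : policy S A)
  (Hopt : forall (pi : policy S A) (h : nat) (s : S),
      Vpi P r beta H pi h s <= Vpi P r beta H pistar h s)
  (pis : nat -> policy S A) (k : nat) (Hk : (1 <= k <= K)%N) :
  beta^-1 * (expR (beta * Vpi P r beta H pistar 1 s1)
             - expR (beta * Vpi P r beta H (pis k) 1 s1))
  = texp P (pis k) H 1 s1
      (sum_gaps P r beta H pistar (s1, pis k 1%N s1)).
Proof.
have -> : sum_gaps P r beta H pistar (s1, pis k 1%N s1) =
    gap_sum P r beta H pistar H 1 (s1, pis k 1%N s1).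
  apply/funext => t; apply: eq_bigr => i _.
  by rewrite /gapbar !expR_Vpi ?expR_Qpi // add1n.
by rewrite /texp texp_from_gap_sum ?add1n // !expR_Vpi.
Qed.
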